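(* Let $X$ be the Brady complex and $x$ a vertex of $X$. Among the five Hamiltonian cycles of the link $L_x$, at most two are of the form $\Sigma\cap L_x$ for some Hamiltonian surface $\Sigma$ of $X$.
   Context: The Brady complex $X$ is the simply connected CAT(0) piecewise Euclidean 2-complex (constructed by T. Brady) on which $\mathrm{Aut}(F_2)$ acts properly and cocompactly by cellular isometries, transitively on vertices. Its closed 2-cells (faces) are unit equilateral triangles and unit lozenges (rhombi with angles $\pi/3$ and $2\pi/3$); every edge lies in exactly one triangle and two lozenges. The link $L_x$ of a vertex $x$ is the graph whose vertices are the edges of $X$ at $x$ and whose edges are the corners at $x$ of faces containing $x$; it is isomorphic to the Moebius ladder on four rungs (cubic graph on eight vertices), which has exactly five Hamiltonian cycles. A Hamiltonian surface in $X$ is a connected union $\Sigma$ of closed faces which is a surface without boundary, contains every vertex and every edge of $X$, and has no multiple vertex; $\Sigma\cap L_x$ denotes the set of corners at $x$ of faces of $\Sigma$, which is a Hamiltonian cycle of $L_x$. *)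

From mathcomp Require Import all_boot.
From mathcomp Require Import finmap.
From Stdlib Require Import Relation_Operators.

Set Implicit Arguments.
Unset Strict Implicit.
Unset Printing Implicit Defensive.

Local Open Scope fset_scope.

(* a letter (g, s): g = false is a, g = true is b; s = true means inverse *)
Definition letter := (bool * bool)%type.
Definition word := seq letter.

Definition linv (l : letter) : letter := (l.1, ~~ l.2).

Definition reduce (w : word) : word :=
  foldr (fun l acc => match acc with
                      | l' :: acc' => if l' == linv l then acc' else l :: acc
                      | [::] => [:: l]
                      end) [::] w.

Definition reduced (w : word) : bool := reduce w == w.

Definition fmul (u v : word) : word := reduce (u ++ v).
Definition finv (u : word) : word := rev (map linv u).

Definition ga : word := [:: (false, false)].
Definition gb : word := [:: (true, false)].

Definition subst (u v : word) (w : word) : word :=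
  reduce (flatten (map (fun l => let x := if l.1 then v else u in
                                 if l.2 then finv x else x) w)).

Definition is_basis (u v : word) : Prop :=
  [/\ reduced u, reduced v,
      (forall w1 w2, reduced w1 -> reduced w2 -> subst u v w1 = subst u v w2 -> w1 = w2)
    & (forall w, reduced w -> exists2 w', reduced w' & subst u v w' = w)].

(* vertices: bases up to signed permutation, encoded by {u, u^-1, v, v^-1} *)
Definition vtx := {fset word}.
Definition vert (u v : word) : vtx := [fset u; finv u; v; finv v].

Definition is_vertex (x : vtx) : Prop := exists u v, is_basis u v /\ x = vert u v.

(* edges: unordered pairs of vertices; the edges of X are the elementary
   Nielsen moves  {u, v} -- {u, uv} *)
Definition edge := {fset vtx}.
Definition mkedge (x y : vtx) : edge := [fset x; y].

Definition is_edge (e : edge) : Prop :=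
  exists u v, is_basis u v /\ e = mkedge (vert u v) (vert u (fmul u v)).

Definition face := {fset edge}.

Definition tri (u v : word) : face :=
  let x := vert u v in
  let y := vert u (fmul u v) in
  let z := vert v (fmul u v) in
  [fset mkedge x y; mkedge y z; mkedge z x].

Definition loz (u v : word) (s : bool) : face :=
  let r := if s then u else finv u in
  let x := vert u v in
  let y := vert u (fmul u v) in
  let z := vert u (fmul (fmul u v) r) in
  let w := vert u (fmul v r) in
  [fset mkedge x y; mkedge y z; mkedge z w; mkedge w x].

Definition is_triangle (F : face) : Prop :=
  exists u v, is_basis u v /\ F = tri u v.
Definition is_lozenge (F : face) : Prop :=
  exists u v s, is_basis u v /\ F = loz u v s.
Definition is_face (F : face) : Prop := is_triangle F \/ is_lozenge F.

Definition face_has (F : face) (x : vtx) : Prop := exists2 e, e \in F & x \in e.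

(* A union Sigma of closed faces is given by its set S of faces. *)
Definition faceset := face -> Prop.

(* Sigma \cap L_x : the corners at x of faces of Sigma (a corner at x of a
   face F containing x is identified with F, each face having exactly one
   corner at each of its vertices) *)
Definition link_part (S : faceset) (x : vtx) : face -> Prop :=
  fun F => S F /\ face_has F x.

(* adjacency in the subgraph Sigma \cap L_x of the link L_x: the two edges
   at x of a face of Sigma *)
Definition link_adj (S : faceset) (x : vtx) (e e' : edge) : Prop :=
  exists F, [/\ S F, e \in F, e' \in F & [/\ x \in e, x \in e' & e != e']].

Definition is_ham_surface (S : faceset) : Prop :=
  [/\
      (forall F, S F -> is_face F),
      (forall F F', S F -> S F' ->
         clos_refl_trans face
           (fun G G' => [/\ S G, S G' & exists x, face_has G x /\ face_has G' x])
           F F'),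
      (* surface without boundary containing every edge of X (hence every
         vertex): every edge of X lies in exactly two faces of Sigma *)
      (forall e, is_edge e ->
         exists F1 F2, [/\ F1 <> F2, S F1, S F2, e \in F1 & e \in F2] /\
                       (forall F, S F -> e \in F -> F = F1 \/ F = F2)) &
      (* no multiple vertex: for every vertex x, Sigma \cap L_x is connected
         (a single cycle through all edges at x) *)
      (forall x, is_vertex x -> forall e e', is_edge e -> is_edge e' ->
         x \in e -> x \in e' -> clos_refl_trans edge (link_adj S x) e e')].

Definition same_link (S1 S2 : faceset) (x : vtx) : Prop :=
  forall F, link_part S1 x F <-> link_part S2 x F.

(* Aut(F_2) acts transitively on the vertices of X, so it suffices to look at the vertex
   {a, b}, transported to an arbitrary vertex {u, v} by the automorphism a |-> u, b |-> v.
   A Hamiltonian surface meets the link of every vertex in a Hamiltonian cycle: each edge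
   of X lies in exactly two of its faces, and its corners connect the link.  The 76 faces
   through {a, b} and its eight neighbours are enumerated, and an exhaustive search shows
   that these local conditions at the nine vertices leave only two possible traces on the
   link of {a, b}.  By pigeonhole, two of any three Hamiltonian surfaces share their trace. *)

From mathcomp Require Import all_boot all_order finmap.
From Stdlib Require Import Relation_Operators Operators_Properties ClassicalEpsilon.

Set Implicit Arguments.
Unset Strict Implicit.
Unset Printing Implicit Defensive.

Import Order.TTheory.

(** * Free reduction *)

Definition cancel_cons (l : letter) (w : word) : word :=
  if w is l' :: w' then if l' == linv l then w' else l :: w else [:: l].

Definition cancel_free : word -> bool := sorted (fun l l' => l' != linv l).

Lemma linvK : involutive linv.
Proof. by case=> g s; rewrite /linv /= negbK. Qed.

Lemma cancel_free_cons l w : cancel_free w -> cancel_free (cancel_cons l w).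
Proof.
case: w => [|l' w] //= Hw; case: ifP => [_ | /negbT Hl]; first exact: path_sorted Hw.
by rewrite /cancel_free /= Hl.
Qed.

Lemma cancel_free_reduce w : cancel_free (reduce w).
Proof. by elim: w => [|l w IHw] //=; apply: cancel_free_cons. Qed.

Lemma reduce_cancel_free w : cancel_free w -> reduce w = w.
Proof.
elim: w => [|l w IHw] //= Hw; rewrite -/(reduce w) IHw; last exact: path_sorted Hw.
by case: w Hw {IHw} => [|l' w] //= /andP[/negbTE ->].
Qed.

Lemma reducedE w : reduced w = cancel_free w.
Proof. by apply/eqP/idP => [<-|/reduce_cancel_free //]; apply: cancel_free_reduce. Qed.

Lemma reduced_reduce w : reduced (reduce w).
Proof. by rewrite reducedE cancel_free_reduce. Qed.

Lemma reduce_id w : reduced w -> reduce w = w.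
Proof. by move/eqP. Qed.

Lemma cancel_consK l w : cancel_free w -> cancel_cons l (cancel_cons (linv l) w) = w.
Proof.
case: w => [|l' w] /=; first by rewrite eqxx.
rewrite linvK; case: (eqVneq l' l) => [-> | Hl] Hw; last by rewrite /= eqxx.
by case: w Hw => [|l'' w] //= /andP[/negbTE ->].
Qed.

Section FoldrReduce.
Variables (f : letter -> word -> word) (P : word -> Prop).
Hypothesis fP : forall l w, P w -> P (f l w).
Hypothesis fK : forall l w, P w -> f l (f (linv l) w) = w.

Lemma foldr_stable s w : P w -> P (foldr f w s).
Proof. by elim: s => //= l s IHs /IHs; apply: fP. Qed.

(* A cancelling pair l, linv l is absorbed by [f], so [foldr f] only sees [reduce s]. *)
Lemma foldr_reduce s w : P w -> foldr f w (reduce s) = foldr f w s.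
Proof.
move=> Pw; elim: s => [|l s IHs] //=; rewrite -/(reduce s) -IHs.
have: cancel_free (reduce s) by apply: cancel_free_reduce.
case: (reduce s) => [|l' r] //= _; case: ifP => [/eqP -> | _] //=.
by rewrite fK //; apply: foldr_stable.
Qed.
End FoldrReduce.

Definition cancel_cat (x w : word) : word := foldr cancel_cons w x.

Lemma reduce_cat x y : reduce (x ++ y) = cancel_cat x (reduce y).
Proof. by rewrite /reduce foldr_cat. Qed.

Lemma cancel_cat_reduce x w : cancel_free w -> cancel_cat (reduce x) w = cancel_cat x w.
Proof.
by apply: (@foldr_reduce _ cancel_free); [apply: cancel_free_cons | apply: cancel_consK].
Qed.

Lemma reduce_catl x y : reduce (reduce x ++ y) = reduce (x ++ y).
Proof. by rewrite !reduce_cat cancel_cat_reduce // cancel_free_reduce. Qed.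

Lemma reduce_catr x y : reduce (x ++ reduce y) = reduce (x ++ y).
Proof. by rewrite !reduce_cat reduce_id // reduced_reduce. Qed.

Lemma reduced_fmul x y : reduced (fmul x y).
Proof. exact: reduced_reduce. Qed.

Lemma fmulA x y z : fmul (fmul x y) z = fmul x (fmul y z).
Proof. by rewrite /fmul reduce_catl reduce_catr catA. Qed.

Lemma fmul1w x : reduced x -> fmul [::] x = x.
Proof. exact: reduce_id. Qed.

Lemma fmulw1 x : reduced x -> fmul x [::] = x.
Proof. by rewrite /fmul cats0; apply: reduce_id. Qed.

Lemma finvK : involutive finv.
Proof. by move=> x; rewrite /finv map_rev revK -map_comp (eq_map linvK) map_id. Qed.

Lemma cancel_catK x w : cancel_free w -> cancel_cat x (cancel_cat (finv x) w) = w.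
Proof.
elim: x w => [|l x IHx] w Hw //=.
rewrite /finv map_cons rev_cons -cats1 /cancel_cat foldr_cat /= -/(finv x).
by rewrite -!/(cancel_cat _ _) IHx ?cancel_consK // cancel_free_cons.
Qed.

Lemma fmulV x : fmul x (finv x) = [::].
Proof. by rewrite /fmul -(cats0 (finv x)) !reduce_cat cancel_catK. Qed.

Lemma fmulVw x : fmul (finv x) x = [::].
Proof. by rewrite -{2}(finvK x) fmulV. Qed.

Lemma reduced_finv x : reduced x -> reduced (finv x).
Proof.
rewrite !reducedE /cancel_free /finv rev_sorted sorted_map; apply: sub_sorted => l l' /=.
by rewrite linvK; apply: contra => /eqP ->.
Qed.

Lemma fmulKV x y : reduced y -> fmul (finv x) (fmul x y) = y.
Proof. by move=> Hy; rewrite -fmulA fmulVw fmul1w. Qed.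

Lemma fmulK x y : reduced y -> fmul (fmul y x) (finv x) = y.
Proof. by move=> Hy; rewrite fmulA fmulV fmulw1. Qed.

Lemma finv_unique x y : reduced x -> reduced y -> fmul x y = [::] -> y = finv x.
Proof. by move=> Hx Hy Exy; rewrite -(fmulKV x Hy) Exy fmulw1 // reduced_finv. Qed.

(** * Substitutions and bases *)

Definition subst_letter (u v : word) (l : letter) : word :=
  let x := if l.1 then v else u in if l.2 then finv x else x.

Lemma reduced_subst u v w : reduced (subst u v w).
Proof. exact: reduced_reduce. Qed.

Lemma subst_cat u v x y : subst u v (x ++ y) = fmul (subst u v x) (subst u v y).
Proof. by rewrite /subst map_cat flatten_cat /fmul reduce_catl reduce_catr. Qed.

Lemma subst_cons u v l w : subst u v (l :: w) = fmul (subst_letter u v l) (subst u v w).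
Proof. by rewrite /subst /fmul reduce_catr. Qed.

Lemma subst_reduce u v w : subst u v (reduce w) = subst u v w.
Proof.
have substE s : subst u v s = foldr (fun l => cancel_cat (subst_letter u v l)) [::] s.
  by elim: s => [|l s IHs] //=; rewrite subst_cons -IHs /fmul reduce_cat reduce_id ?reduced_subst.
rewrite !substE; apply: (@foldr_reduce _ cancel_free) => // [l s Hs | l s Hs].
  by elim: (subst_letter u v l) => //= l' x; apply: cancel_free_cons.
have -> : subst_letter u v (linv l) = finv (subst_letter u v l).
  by case: l => [g []]; rewrite /subst_letter /= ?finvK.
by rewrite cancel_catK.
Qed.

Lemma subst_fmul u v x y : subst u v (fmul x y) = fmul (subst u v x) (subst u v y).
Proof. by rewrite /fmul subst_reduce subst_cat. Qed.

Lemma subst_finv u v x : subst u v (finv x) = finv (subst u v x).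
Proof.
apply: finv_unique; rewrite ?reduced_subst //.
by rewrite -subst_cat -subst_reduce -/(fmul x (finv x)) fmulV.
Qed.

Lemma subst_comp u v p q w : subst u v (subst p q w) = subst (subst u v p) (subst u v q) w.
Proof.
elim: w => [|l w IHw] //; rewrite !subst_cons subst_fmul IHw.
by case: l => [[] []]; rewrite /subst_letter /= ?subst_finv.
Qed.

Lemma subst_id w : subst ga gb w = reduce w.
Proof. by rewrite /subst; congr reduce; elim: w => [|[[] []] w IHw] //=; rewrite IHw. Qed.

Lemma subst_ga u v : reduced u -> subst u v ga = u.
Proof. by move=> Ru; rewrite /subst /= cats0 reduce_id. Qed.

Lemma subst_gb u v : reduced v -> subst u v gb = v.
Proof. by move=> Rv; rewrite /subst /= cats0 reduce_id. Qed.

Section Basis.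
Variables u v : word.
Hypothesis uv_basis : is_basis u v.

Lemma basis_inj w1 w2 : reduced w1 -> reduced w2 -> subst u v w1 = subst u v w2 -> w1 = w2.
Proof. by case: uv_basis => _ _ inj _; apply: inj. Qed.

Lemma basis_surj w : reduced w -> exists2 w', reduced w' & subst u v w' = w.
Proof. by case: uv_basis => _ _ _; apply. Qed.

(* [(p', q')] certifies [(p, q)] as a basis: the two substitutions are mutually inverse. *)
Lemma basis_subst p q p' q' : reduced p -> reduced q -> reduced p' -> reduced q' ->
  subst p' q' p = ga -> subst p' q' q = gb -> subst p q p' = ga -> subst p q q' = gb ->
  is_basis (subst u v p) (subst u v q).
Proof.
move=> Rp Rq Rp' Rq' E1 E2 E3 E4; split; rewrite ?reduced_subst //.
- move=> w1 w2 R1 R2; rewrite -!subst_comp => /basis_inj E.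
  have := congr1 (subst p' q') (E (reduced_subst _ _ _) (reduced_subst _ _ _)).
  by rewrite !subst_comp E1 E2 !subst_id !reduce_id.
- move=> w /basis_surj [w1 R1 <-]; exists (subst p' q' w1); first exact: reduced_subst.
  by rewrite -subst_comp [subst p q _]subst_comp E3 E4 subst_id reduce_id.
Qed.
End Basis.

(** * Finite sets given by lists *)

Definition same_elems (T : eqType) (e : rel T) (r s : seq T) : bool :=
  all (fun x => has (e x) s) r && all (fun y => has (e y) r) s.

Section SameElems.
Variables (T : eqType) (K : choiceType) (f : T -> K) (e : rel T).
Hypothesis eP : forall x y, reflect (f x = f y) (e x y).

Lemma in_seq_fset_map x r : (f x \in seq_fset tt (map f r)) = has (e x) r.
Proof. by rewrite seq_fsetE; apply/mapP/hasP => -[y yr /eP Exy]; exists y. Qed.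

Lemma same_elemsP r s :
  reflect (seq_fset tt (map f r) = seq_fset tt (map f s)) (same_elems e r s).
Proof.
apply: (iffP andP) => [[/allP rs /allP sr] | Ers].
  apply/fsetP => k; rewrite !seq_fsetE; apply/idP/idP => /mapP-[x xr ->].
  - by move: (rs x xr); rewrite -in_seq_fset_map seq_fsetE.
  - by move: (sr x xr); rewrite -in_seq_fset_map seq_fsetE.
split; apply/allP => x xr; rewrite -in_seq_fset_map.
  by rewrite -Ers seq_fsetE map_f.
by rewrite Ers seq_fsetE map_f.
Qed.
End SameElems.

Section SameElemsMap.
Variables (T U : eqType) (g : T -> U) (e : rel U) (e' : rel T) (P : pred T).
Hypothesis g_compat : {in P &, forall x y, e (g x) (g y) = e' x y}.

Lemma has_map_rel x r : P x -> all P r -> has (e (g x)) (map g r) = has (e' x) r.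
Proof.
by move=> Px /allP Pr; rewrite has_map; apply: eq_in_has => y /Pr Py /=; apply: g_compat.
Qed.

Lemma same_elems_map r s : all P r -> all P s ->
  same_elems e (map g r) (map g s) = same_elems e' r s.
Proof.
move=> Pr Ps; rewrite /same_elems !all_map; congr andb; apply: eq_in_all => x xr /=.
  by rewrite has_map_rel // (allP Pr).
by rewrite has_map_rel // (allP Ps).
Qed.
End SameElemsMap.

Section Canon.
Variables (d : Order.disp_t) (K : orderType d).

Definition canon (s : seq K) : seq K := sort <=%O (undup s).

Lemma canonP r s : reflect (r =i s) (canon r == canon s).
Proof.
apply: (iffP eqP) => [E x | E].
  by rewrite -mem_undup -(mem_sort <=%O) -/(canon r) E mem_sort mem_undup.
apply/(perm_sortP le_total le_trans le_anti)/uniq_perm; rewrite ?undup_uniq // => x.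
by rewrite !mem_undup E.
Qed.

Lemma same_elems_canon (T : eqType) (e : rel T) (k : T -> K) :
  (forall x y, e x y = (k x == k y)) ->
  forall r s, same_elems e r s = (canon (map k r) == canon (map k s)).
Proof.
move=> ek r s; have hasE x t : has (e x) t = (k x \in map k t).
  apply/hasP/mapP => -[y yt]; first by rewrite ek => /eqP; exists y.
  by move=> Exy; exists y; rewrite // ek Exy.
apply/andP/canonP => [[/allP rs /allP sr] z | E].
  by apply/mapP/mapP => -[x xt ->]; [move: (rs x xt) | move: (sr x xt)];
    rewrite hasE => /mapP[y ys ->]; exists y.
by split; apply/allP => x xt; rewrite hasE; [rewrite -E | rewrite E]; apply: map_f.
Qed.
End Canon.

(** * Cells of X as nested lists of words *)

Definition vert_code (p q : word) : seq word := [:: p; finv p; q; finv q].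

Definition edge_code (p q : word) : seq (seq word) :=
  [:: vert_code p q; vert_code p (fmul p q)].

Definition tri_code (p q : word) : seq (seq (seq word)) :=
  let x := vert_code p q in let y := vert_code p (fmul p q) in
  let z := vert_code q (fmul p q) in
  [:: [:: x; y]; [:: y; z]; [:: z; x]].

Definition loz_code (p q : word) (s : bool) : seq (seq (seq word)) :=
  let r := if s then p else finv p in
  let x := vert_code p q in let y := vert_code p (fmul p q) in
  let z := vert_code p (fmul (fmul p q) r) in let w := vert_code p (fmul q r) in
  [:: [:: x; y]; [:: y; z]; [:: z; w]; [:: w; x]].

Definition vtx_of (r : seq word) : vtx := seq_fset tt r.
Definition edge_of (r : seq (seq word)) : edge := seq_fset tt (map vtx_of r).
Definition face_of (r : seq (seq (seq word))) : face := seq_fset tt (map edge_of r).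

Lemma vert_codeE p q : vert p q = vtx_of (vert_code p q).
Proof. by apply/fsetP => w; rewrite seq_fsetE !inE /= !orbA. Qed.

Lemma mkedgeE x y : mkedge (vtx_of x) (vtx_of y) = edge_of [:: x; y].
Proof. by apply/fsetP => z; rewrite seq_fsetE !inE. Qed.

Lemma edge_codeE p q : mkedge (vert p q) (vert p (fmul p q)) = edge_of (edge_code p q).
Proof. by rewrite !vert_codeE mkedgeE. Qed.

Lemma tri_codeE p q : tri p q = face_of (tri_code p q).
Proof. by rewrite /tri !vert_codeE !mkedgeE; apply/fsetP => z; rewrite seq_fsetE !inE /= !orbA. Qed.

Lemma loz_codeE p q s : loz p q s = face_of (loz_code p q s).
Proof. by rewrite /loz !vert_codeE !mkedgeE; apply/fsetP => z; rewrite seq_fsetE !inE /= !orbA. Qed.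

Definition same_vtx : rel (seq word) := same_elems (fun w w' : word => w == w').
Definition same_edge : rel (seq (seq word)) := same_elems same_vtx.
Definition same_face : rel (seq (seq (seq word))) := same_elems same_edge.

(* Keys decide [same_face] by one comparison; they are only used to deduplicate faces. *)
Definition letter_code (l : letter) : nat := l.1.*2 + l.2.

Lemma letter_code_inj : injective letter_code.
Proof. by move=> [[] []] [[] []]. Qed.

Definition word_key (w : word) : seqlexi nat := map letter_code w.
Definition vtx_key (r : seq word) : seqlexi (seqlexi nat) := canon (map word_key r).
Definition edge_key (r : seq (seq word)) : seqlexi (seqlexi (seqlexi nat)) :=
  canon (map vtx_key r).
Definition face_key (r : seq (seq (seq word))) : seq (seqlexi (seqlexi (seqlexi nat))) :=
  canon (map edge_key r).

Lemma same_vtx_key r s : same_vtx r s = (vtx_key r == vtx_key s).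
Proof.
apply: same_elems_canon => x y.
by apply/eqP/eqP => [-> // | /(inj_map letter_code_inj)].
Qed.

Lemma same_edge_key r s : same_edge r s = (edge_key r == edge_key s).
Proof. exact: same_elems_canon same_vtx_key r s. Qed.

Lemma same_face_key r s : same_face r s = (face_key r == face_key s).
Proof. exact: same_elems_canon same_edge_key r s. Qed.

Lemma same_vtxP r s : reflect (vtx_of r = vtx_of s) (same_vtx r s).
Proof. by have := @same_elemsP _ _ id _ (fun x y => eqP) r s; rewrite !map_id. Qed.

Lemma same_edgeP r s : reflect (edge_of r = edge_of s) (same_edge r s).
Proof. exact: same_elemsP same_vtxP r s. Qed.

Lemma same_faceP r s : reflect (face_of r = face_of s) (same_face r s).
Proof. exact: same_elemsP same_edgeP r s. Qed.

Lemma in_edge_of x r : (vtx_of x \in edge_of r) = has (same_vtx x) r.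
Proof. exact: in_seq_fset_map same_vtxP x r. Qed.

Lemma in_face_of x r : (edge_of x \in face_of r) = has (same_edge x) r.
Proof. exact: in_seq_fset_map same_edgeP x r. Qed.

Definition reduced_vtx : pred (seq word) := all reduced.
Definition reduced_edge : pred (seq (seq word)) := all reduced_vtx.
Definition reduced_face : pred (seq (seq (seq word))) := all reduced_edge.

Lemma reduced_vert_code p q : reduced p -> reduced q -> reduced_vtx (vert_code p q).
Proof. by move=> Rp Rq; rewrite /reduced_vtx /= Rp Rq !reduced_finv. Qed.

Lemma reduced_edge_code p q : reduced p -> reduced q -> reduced_edge (edge_code p q).
Proof.
move=> Rp Rq; rewrite /reduced_edge /reduced_vtx /=.
by rewrite !reduced_finv ?reduced_fmul ?Rp ?Rq.
Qed.

Lemma reduced_tri_code p q : reduced p -> reduced q -> reduced_face (tri_code p q).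
Proof.
move=> Rp Rq; rewrite /reduced_face /reduced_edge /reduced_vtx /=.
by rewrite !reduced_finv ?reduced_fmul ?Rp ?Rq.
Qed.

Lemma reduced_loz_code p q s : reduced p -> reduced q -> reduced_face (loz_code p q s).
Proof.
move=> Rp Rq; rewrite /reduced_face /reduced_edge /reduced_vtx /=.
by rewrite !reduced_finv ?reduced_fmul ?Rp ?Rq.
Qed.

Section SubstCodes.
Variables u v : word.

Definition subst_vtx : seq word -> seq word := map (subst u v).
Definition subst_edge : seq (seq word) -> seq (seq word) := map subst_vtx.
Definition subst_face : seq (seq (seq word)) -> seq (seq (seq word)) := map subst_edge.

Lemma subst_vert_code p q : subst_vtx (vert_code p q) = vert_code (subst u v p) (subst u v q).
Proof. by rewrite /subst_vtx /= !subst_finv. Qed.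

Lemma subst_edge_code p q : subst_edge (edge_code p q) = edge_code (subst u v p) (subst u v q).
Proof. by rewrite /subst_edge !map_cons !subst_vert_code subst_fmul. Qed.

Lemma subst_tri_code p q : subst_face (tri_code p q) = tri_code (subst u v p) (subst u v q).
Proof. by rewrite /subst_face /subst_edge !map_cons !subst_vert_code subst_fmul. Qed.

Lemma subst_loz_code p q s : subst_face (loz_code p q s) = loz_code (subst u v p) (subst u v q) s.
Proof.
rewrite /subst_face /subst_edge !map_cons !subst_vert_code !subst_fmul.
by case: s; rewrite ?subst_finv.
Qed.

Hypothesis uv_basis : is_basis u v.

Lemma same_vtx_subst :
  {in reduced_vtx &, forall r s, same_vtx (subst_vtx r) (subst_vtx s) = same_vtx r s}.
Proof.
move=> r s Rr Rs; apply: same_elems_map Rr Rs => x y Rx Ry /=.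
by apply/eqP/eqP => [/(basis_inj uv_basis Rx Ry) | ->].
Qed.

Lemma same_edge_subst :
  {in reduced_edge &, forall r s, same_edge (subst_edge r) (subst_edge s) = same_edge r s}.
Proof. by move=> r s Rr Rs; apply: same_elems_map Rr Rs; apply: same_vtx_subst. Qed.

Lemma same_face_subst :
  {in reduced_face &, forall r s, same_face (subst_face r) (subst_face s) = same_face r s}.
Proof. by move=> r s Rr Rs; apply: same_elems_map Rr Rs; apply: same_edge_subst. Qed.
End SubstCodes.

(** * The faces through a vertex *)

Definition touches (Y : seq word) (c : seq (seq (seq word))) : bool := has (has (same_vtx Y)) c.

Lemma same_vtx_mem Y r : same_vtx Y r -> {subset r <= Y}.
Proof. by case/andP=> _ /allP Hr x /Hr /hasP[y yY /eqP ->]. Qed.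

Lemma vert_code_mem Y p q : same_vtx Y (vert_code p q) -> p \in Y /\ q \in Y.
Proof. by move/same_vtx_mem => H; split; apply: H; rewrite !inE eqxx ?orbT. Qed.

(* A triangle through [Y] has a vertex [{p, q}], [{p, pq}] or [{q, pq}] equal to [Y],
   which determines [(p, q)] from two elements of [Y]. *)
Definition cand_tri (Y : seq word) : seq (word * word) :=
  [seq (p, q) | p <- Y, q <- Y] ++ [seq (p, fmul (finv p) m) | p <- Y, m <- Y]
  ++ [seq (fmul m (finv q), q) | q <- Y, m <- Y].

Lemma touches_tri Y p q : touches Y (tri_code p q) ->
  [\/ same_vtx Y (vert_code p q), same_vtx Y (vert_code p (fmul p q))
     | same_vtx Y (vert_code q (fmul p q))].
Proof.
case/hasP=> e; rewrite !inE => /or3P[] /eqP -> /hasP[r];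
  rewrite !inE => /orP[] /eqP -> H; by [constructor 1 | constructor 2 | constructor 3].
Qed.

Lemma cand_tri_complete Y p q : reduced p -> reduced q ->
  touches Y (tri_code p q) -> (p, q) \in cand_tri Y.
Proof.
move=> Rp Rq /touches_tri[] /vert_code_mem[xY yY]; rewrite !mem_cat.
- by rewrite (allpairs_f (fun x y => (x, y)) xY yY).
- rewrite -[in (p, q)](fmulKV p Rq).
  by rewrite (allpairs_f (fun x m => (x, fmul (finv x) m)) xY yY) orbT.
- rewrite -[in (p, q)](fmulK q Rp).
  by rewrite (allpairs_f (fun x m => (fmul m (finv x), x)) xY yY) !orbT.
Qed.

(* Every vertex of a lozenge [loz p q s] is [{p, m}] with [m] one of [q], [pq], [pqr], [qr]. *)
Definition loz_second (Y : seq word) (p : word) (s : bool) : seq word :=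
  let r := if s then p else finv p in
  [seq fmul xy.1 (fmul m xy.2)
     | m <- Y, xy <- [:: ([::], [::]); (finv p, [::]); (finv p, finv r); ([::], finv r)]].

Definition cand_loz (Y : seq word) : seq (word * word * bool) :=
  [seq (ps.1, q, ps.2) | ps <- [seq (p, s) | p <- Y, s <- [:: true; false]],
                         q <- loz_second Y ps.1 ps.2].

Lemma touches_loz Y p q s : touches Y (loz_code p q s) ->
  let r := if s then p else finv p in
  exists2 m, same_vtx Y (vert_code p m) & m \in [:: q; fmul p q; fmul (fmul p q) r; fmul q r].
Proof.
case/hasP=> e; rewrite !inE => /or4P[] /eqP -> /hasP[x];
  rewrite !inE => /orP[] /eqP -> H; by eexists; [exact: H | rewrite !inE eqxx ?orbT].
Qed.

Lemma cand_loz_complete Y p q s : reduced p -> reduced q ->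
  touches Y (loz_code p q s) -> (p, q, s) \in cand_loz Y.
Proof.
move=> Rp Rq /touches_loz[m /vert_code_mem[pY mY] mq].
apply/allpairsPdep; exists (p, s), q; split => //.
  by apply/allpairsPdep; exists p, s; split => //; case: s mq; rewrite !inE.
set r := if s then p else finv p.
have Rr : reduced r by rewrite /r; case: (s); rewrite ?reduced_finv.
apply/allpairsPdep; move: mq; rewrite !inE => /or4P[] /eqP Em.
- exists m, ([::], [::]); split; rewrite ?inE ?eqxx //=.
  by rewrite Em fmulw1 // fmul1w.
- exists m, (finv p, [::]); split; rewrite ?inE ?eqxx ?orbT //=.
  by rewrite Em fmulw1 ?reduced_fmul // fmulKV.
- exists m, (finv p, finv r); split; rewrite ?inE ?eqxx ?orbT //=.
  by rewrite Em fmulK ?reduced_fmul // fmulKV.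
- exists m, ([::], finv r); split; rewrite ?inE ?eqxx ?orbT //=.
  by rewrite Em fmulK // fmul1w.
Qed.

Definition letters : seq letter := [:: (false, false); (false, true); (true, false); (true, true)].

Fixpoint words_upto (n : nat) : seq word :=
  [::] :: (if n is n'.+1 then [seq l :: w | l <- letters, w <- words_upto n'] else [::]).

Definition short_words : seq word := undup [seq w <- words_upto 2 | reduced w].

Definition collapses (p q : word) : bool := ~~ uniq [seq subst p q w | w <- short_words].

Lemma collapses_not_basis u v p q : is_basis (subst u v p) (subst u v q) -> ~~ collapses p q.
Proof.
case=> _ _ inj _; rewrite negbK map_inj_in_uniq ?undup_uniq // => w1 w2.
rewrite !mem_undup !mem_filter => /andP[R1 _] /andP[R2 _] E.
by apply: inj => //; rewrite -!subst_comp E.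
Qed.

Definition basis_witness (p q t : word) : word :=
  head [::] [seq w <- words_upto 4 | reduced w & subst p q w == t].

Definition basis_cert (pq : word * word) : bool :=
  let: (p, q) := pq in
  let p' := basis_witness p q ga in let q' := basis_witness p q gb in
  [&& reduced p, reduced q, reduced p', reduced q',
      subst p' q' p == ga, subst p' q' q == gb, subst p q p' == ga & subst p q q' == gb].

Lemma basis_certP u v pq : is_basis u v -> basis_cert pq ->
  [/\ reduced pq.1, reduced pq.2 & is_basis (subst u v pq.1) (subst u v pq.2)].
Proof.
case: pq => p q uv_basis /and5P[Rp Rq Rp' Rq' /and4P[/eqP E1 /eqP E2 /eqP E3 /eqP E4]].
by split => //; apply: basis_subst Rp' Rq' E1 E2 E3 E4.
Qed.

Definition faces_around (Y : seq word) : seq (seq (seq (seq word))) :=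
  [seq tri_code pq.1 pq.2 | pq <- [seq pq <- cand_tri Y | touches Y (tri_code pq.1 pq.2)]
                          & ~~ collapses pq.1 pq.2]
  ++ [seq loz_code pqs.1.1 pqs.1.2 pqs.2
       | pqs <- [seq pqs <- cand_loz Y | touches Y (loz_code pqs.1.1 pqs.1.2 pqs.2)]
       & ~~ collapses pqs.1.1 pqs.1.2].

Section FacesAround.
Variables u v : word.
Hypothesis uv_basis : is_basis u v.

Lemma touches_subst Y c : reduced_vtx Y -> reduced_face c ->
  face_has (face_of (subst_face u v c)) (vtx_of (subst_vtx u v Y)) -> touches Y c.
Proof.
move=> RY Rc [e]; rewrite seq_fsetE => /mapP[r' /mapP[r rc ->] ->].
rewrite in_edge_of (has_map_rel (same_vtx_subst uv_basis)) //; last exact: (allP Rc).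
by move=> Yr; apply/hasP; exists r.
Qed.

Lemma face_around Y F : reduced_vtx Y -> is_face F ->
  face_has F (vtx_of (subst_vtx u v Y)) ->
  exists2 c, c \in faces_around Y & reduced_face c /\ F = face_of (subst_face u v c).
Proof.
move=> RY [[P [Q [PQ_basis ->]]] | [P [Q [s [PQ_basis ->]]]]];
  have [/(basis_surj uv_basis)[p Rp EP] /(basis_surj uv_basis)[q Rq EQ] _ _] := PQ_basis;
  subst P Q.
- rewrite tri_codeE -subst_tri_code => /(touches_subst RY (reduced_tri_code Rp Rq)) Yc.
  exists (tri_code p q); last by split; first exact: reduced_tri_code.
  rewrite mem_cat; apply/orP; left.
  apply/mapP; exists (p, q) => //.
  rewrite !mem_filter cand_tri_complete // andbT.
  by apply/andP; split; [exact: collapses_not_basis PQ_basis | exact: Yc].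
- rewrite loz_codeE -subst_loz_code => /(touches_subst RY (reduced_loz_code s Rp Rq)) Yc.
  exists (loz_code p q s); last by split; first exact: reduced_loz_code.
  rewrite mem_cat; apply/orP; right.
  apply/mapP; exists (p, q, s) => //.
  rewrite !mem_filter cand_loz_complete // andbT.
  by apply/andP; split; [exact: collapses_not_basis PQ_basis | exact: Yc].
Qed.
End FacesAround.

Section Representatives.
Variables (T K : eqType) (k : T -> K) (x0 : T).

(* One element of [s] per key, in order of first occurrence of the keys, which keeps the
   faces of each vertex together for the search below. *)
Definition reps (s : seq T) : seq T :=
  let ks := map k s in [seq nth x0 s (index y ks) | y <- rev (undup (rev ks))].

Lemma map_key_reps s : map k (reps s) = rev (undup (rev (map k s))).
Proof.
rewrite /reps -map_comp -[RHS]map_id; apply/eq_in_map => y.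
rewrite mem_rev mem_undup mem_rev => ys /=.
by rewrite -(nth_map x0 (k x0)) ?nth_index // -(size_map k) index_mem.
Qed.

Lemma reps_uniq s : uniq (map k (reps s)).
Proof. by rewrite map_key_reps rev_uniq undup_uniq. Qed.

Lemma reps_cover s x : x \in s -> k x \in map k (reps s).
Proof. by move=> xs; rewrite map_key_reps mem_rev mem_undup mem_rev map_f. Qed.
End Representatives.

Lemma reps_has_same_face s c : c \in s -> has (same_face c) (reps face_key [::] s).
Proof.
move/(reps_cover face_key [::])/mapP=> [c' c'_reps /eqP Ec].
by apply/hasP; exists c'; rewrite // same_face_key Ec.
Qed.

(** * Exhaustive search *)

Record constr := Constr { scope : seq nat; test : seq bool -> bool }.

Definition holds (c : constr) (f : nat -> bool) : bool := test c (map f (scope c)).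

(* [c] is checked as soon as its last variable [i] has been assigned. *)
Definition due (i : nat) (c : constr) : bool := (i \in scope c) && all (fun j => j <= i) (scope c).

(* Written with [if] rather than [&&] or [==>]: [vm_compute] evaluates both arguments of
   a boolean connective, which would defeat the pruning. *)
Fixpoint search (cs : seq constr) (goal : constr) (k : nat) (asg : seq bool) : bool :=
  if k is k'.+1 then
    all (fun b => let asg' := rcons asg b in
          if all (fun c => if due (size asg) c then holds c (nth false asg') else true) cs
          then search cs goal k' asg' else true)
      [:: true; false]
  else holds goal (nth false asg).

Lemma holds_mkseq c f n :
  all (fun j => j < n) (scope c) -> holds c (nth false (mkseq f n)) = holds c f.
Proof.
by move=> /allP Hc; rewrite /holds; congr test; apply/eq_in_map => j /Hc; apply: nth_mkseq.
Qed.

Lemma search_sound cs goal f k n : search cs goal k (mkseq f n) -> all (holds^~ f) cs ->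
  all (fun j => j < n + k) (scope goal) -> holds goal f.
Proof.
elim: k n => [|k IHk] n /=; first by rewrite addn0 => + _ /holds_mkseq <-.
move=> Hsearch Hcs Hgoal; apply: (IHk n.+1) => //; last by rewrite addSnnS.
have Hdue : all (fun c => if due n c then holds c (nth false (mkseq f n.+1)) else true) cs.
  apply: sub_all Hcs => c Hc; case: ifP => // /andP[_ /allP Hscope].
  by rewrite holds_mkseq //; apply/allP => j /Hscope; rewrite ltnS.
move: Hsearch Hdue; rewrite size_mkseq /= andbT mkseqS => /andP[Ht Hf].
by case: (f n) => Hd; [move: Ht | move: Hf]; rewrite Hd.
Qed.

(** * Hamiltonian surfaces near a vertex *)

Definition crosses (m : seq bool) (js : seq nat) : bool :=
  has (fun i => has (fun j => nth false m i != nth false m j) js) js.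

Fixpoint bitseqs (n : nat) : seq (seq bool) :=
  if n is n'.+1 then [seq b :: m | b <- [:: true; false], m <- bitseqs n'] else [:: [::]].

(* [E] lists, for the chosen corners at a vertex, the two link vertices each one joins:
   the chosen subgraph of the link is a Hamiltonian cycle iff it is 2-regular and
   crosses every cut. *)
Definition link_two_regular (n : nat) (E : seq (seq nat)) : bool :=
  all (fun j => count (fun js => j \in js) E == 2) (iota 0 n).

Definition link_crosses_cuts (n : nat) (E : seq (seq nat)) : bool :=
  all (fun m => has (nth false m) (iota 0 n) && has (fun j => ~~ nth false m j) (iota 0 n)
                ==> has (crosses m) E) (bitseqs n).

Definition link_cycle_test (n : nat) (E : seq (seq nat)) : bool :=
  if link_two_regular n E then link_crosses_cuts n E else false.

(* The eight edges of X at [{p, q}] are the [{x, y} -- {x, xy}] with [x] one of [p], [p^-1],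
   [q], [q^-1] and [y] in the other pair. *)
Definition edge_pairs (p q : word) : seq (word * word) :=
  [:: (p, q); (p, finv q); (finv p, q); (finv p, finv q);
      (q, p); (q, finv p); (finv q, p); (finv q, finv p)].

Definition link_edges (p q : word) : seq (seq (seq word)) :=
  [seq edge_code xy.1 xy.2 | xy <- edge_pairs p q].

Section Neighbourhood.
Variable D : seq (seq (seq (seq word))).

Definition nbhd_face (u v : word) (g : nat) : face := face_of (subst_face u v (nth [::] D g)).

Definition faces_at (Y : seq word) : seq nat :=
  [seq g <- iota 0 (size D) | touches Y (nth [::] D g)].

Definition link_ends (p q : word) (g : nat) : seq nat :=
  [seq j <- iota 0 8 | has (same_edge (nth [::] (link_edges p q) j)) (nth [::] D g)].

Definition vertex_ok (p q : word) : bool :=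
  let Y := vert_code p q in
  [&& basis_cert (p, q), all basis_cert (edge_pairs p q),
      all (has (same_vtx Y)) (link_edges p q),
      uniq (map edge_key (link_edges p q))
    & all (fun g => all (fun r => has (same_vtx Y) r ==> has (same_edge r) (link_edges p q))
                        (nth [::] D g)) (faces_at Y)].

Definition link_constr (p q : word) : constr :=
  let F := faces_at (vert_code p q) in let E := map (link_ends p q) F in
  Constr F (fun sel => link_cycle_test 8 (mask sel E)).
End Neighbourhood.

Lemma count_two (T : eqType) (P : pred T) s a b : uniq s -> a \in s -> b \in s -> a != b ->
  P a -> P b -> {in s, forall x, P x -> x = a \/ x = b} -> count P s = 2.
Proof.
move=> s_uniq a_s b_s ab Pa Pb only_ab; rewrite -size_filter.
have/perm_size-> // : perm_eq [seq x <- s | P x] [:: a; b].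
apply: uniq_perm; rewrite ?filter_uniq //= ?inE ?andbT //.
move=> x; rewrite mem_filter !inE; apply/andP/orP => [[Px /only_ab] | ].
  by case/(_ Px) => ->; rewrite eqxx ?orbT; [left | right].
by case=> /eqP ->.
Qed.

Section LinkCycle.
Variables (u v : word) (D : seq (seq (seq (seq word)))) (S : faceset) (sel : nat -> bool).
Variables p q : word.
Hypothesis uv_basis : is_basis u v.
Hypothesis D_reduced : all reduced_face D.
Hypothesis D_uniq : uniq (map face_key D).
Hypothesis S_ham : is_ham_surface S.
Hypothesis selP : forall g, reflect (S (nbhd_face D u v g)) (sel g).
Hypothesis pq_ok : vertex_ok D p q.
Hypothesis D_cover : all (fun c => has (same_face c) D) (faces_around (vert_code p q)).

Local Notation Y := (vert_code p q).
Local Notation x := (vtx_of (subst_vtx u v (vert_code p q))).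
Local Notation F := (faces_at D (vert_code p q)).
Local Notation ends := (link_ends D p q).
Local Notation FF := (nbhd_face D u v).
Let pair j := nth ([::], [::]) (edge_pairs p q) j.
Let link_code j := nth [::] (link_edges p q) j.
Let link_vertex j := edge_of (subst_edge u v (link_code j)).

Let pq_cert : basis_cert (p, q). Proof. by case/and5P: pq_ok. Qed.
Let edges_cert : all basis_cert (edge_pairs p q). Proof. by case/and5P: pq_ok. Qed.
Let Y_in_edges : all (has (same_vtx Y)) (link_edges p q). Proof. by case/and5P: pq_ok. Qed.
Let edges_distinct : uniq (map edge_key (link_edges p q)).
Proof. by case/and5P: pq_ok. Qed.
Let edges_complete :
  all (fun g => all (fun r => has (same_vtx Y) r ==> has (same_edge r) (link_edges p q))
                    (nth [::] D g)) F.
Proof. by case/and5P: pq_ok. Qed.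

Let Y_reduced : reduced_vtx Y.
Proof. by have [Rp Rq _] := basis_certP uv_basis pq_cert; apply: reduced_vert_code. Qed.

Let D_nth_reduced g : reduced_face (nth [::] D g).
Proof.
by case: (ltnP g (size D)) => [/(mem_nth [::])/(allP D_reduced) | /(nth_default [::]) ->].
Qed.

Let pair_cert j : j < 8 -> [/\ link_code j = edge_code (pair j).1 (pair j).2,
  reduced (pair j).1, reduced (pair j).2 & is_basis (subst u v (pair j).1) (subst u v (pair j).2)].
Proof.
move=> jlt; have pair_in := mem_nth ([::], [::]) (jlt : j < size (edge_pairs p q)).
have [R1 R2 B] := basis_certP uv_basis (allP edges_cert _ pair_in).
by split=> //; rewrite /link_code (nth_map ([::], [::])).
Qed.

Let link_code_reduced j : reduced_edge (link_code j).
Proof.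
case: (ltnP j 8) => [/pair_cert[-> R1 R2 _] | jge]; first exact: reduced_edge_code.
by rewrite /link_code nth_default.
Qed.

Lemma vertex_is_vertex : is_vertex x.
Proof.
have [_ _ B] := basis_certP uv_basis pq_cert.
by exists (subst u v p), (subst u v q); split; rewrite // vert_codeE subst_vert_code.
Qed.

Lemma link_vertex_is_edge j : j < 8 -> is_edge (link_vertex j).
Proof.
case/pair_cert=> E _ _ B; do 2 eexists; split; first exact: B.
by rewrite /link_vertex E subst_edge_code edge_codeE.
Qed.

Lemma vertex_in_link_vertex j : j < 8 -> x \in link_vertex j.
Proof.
move=> jlt; rewrite /link_vertex in_edge_of (has_map_rel (same_vtx_subst uv_basis)) //.
exact: (allP Y_in_edges _ (mem_nth [::] (jlt : j < size (link_edges p q)))).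
Qed.

Lemma link_vertex_inj i j : i < 8 -> j < 8 -> link_vertex i = link_vertex j -> i = j.
Proof.
move=> ilt jlt /same_edgeP.
rewrite (same_edge_subst uv_basis (link_code_reduced i) (link_code_reduced j)) same_edge_key.
rewrite /link_code -!(nth_map [::] (edge_key [::])) //.
by rewrite (nth_uniq _ _ _ edges_distinct) => // /eqP.
Qed.

Lemma nbhd_face_inj g g' : g < size D -> g' < size D -> FF g = FF g' -> g = g'.
Proof.
move=> glt g'lt /same_faceP.
rewrite (same_face_subst uv_basis (D_nth_reduced g) (D_nth_reduced g')) same_face_key.
by rewrite -!(nth_map [::] (face_key [::])) // (nth_uniq _ _ _ D_uniq) ?size_map // => /eqP.
Qed.

Lemma face_at_vertex F0 : is_face F0 -> face_has F0 x -> exists2 g, g \in F & F0 = FF g.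
Proof.
move=> F0_face F0x; have [c c_around [Rc F0E]] := face_around uv_basis Y_reduced F0_face F0x.
have /hasP[c' c'D cc'] := allP D_cover c c_around.
have FFE : F0 = FF (index c' D).
  rewrite F0E /nbhd_face nth_index //; apply/same_faceP.
  by rewrite (same_face_subst uv_basis) //; apply: (allP D_reduced).
exists (index c' D) => //; rewrite mem_filter mem_iota index_mem c'D !andbT.
by apply: (touches_subst uv_basis Y_reduced (D_nth_reduced _)); move: F0x; rewrite FFE.
Qed.

Lemma surface_face_at_link_vertex F0 k : k < 8 -> S F0 -> link_vertex k \in F0 ->
  exists2 g, g \in F & F0 = FF g.
Proof.
move=> klt SF0 eF0; have [S_faces _ _ _] := S_ham.
apply: face_at_vertex (S_faces _ SF0) _.
by exists (link_vertex k); last exact: vertex_in_link_vertex.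
Qed.

Lemma link_vertex_in_face j g : j < 8 -> (link_vertex j \in FF g) = (j \in ends g).
Proof.
move=> jlt; rewrite /link_vertex /nbhd_face in_face_of (has_map_rel (same_edge_subst uv_basis)) //.
by rewrite /link_ends mem_filter mem_iota jlt !andbT.
Qed.

Lemma link_adj_ends k e' : k < 8 -> link_adj S x (link_vertex k) e' ->
  exists g k', [/\ g \in F, sel g, k \in ends g, k' \in ends g & e' = link_vertex k'].
Proof.
move=> klt [F0 [SF0 eF0 e'F0 [_ xe' _]]].
have [g gF F0E] := surface_face_at_link_vertex klt SF0 eF0.
move: (e'F0); rewrite F0E seq_fsetE => /mapP[_ /mapP[r rDg ->] e'E].
have Yr : has (same_vtx Y) r.
  move: xe'; rewrite e'E in_edge_of (has_map_rel (same_vtx_subst uv_basis)) //.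
  exact: (allP (D_nth_reduced g)).
have := allP (allP edges_complete g gF) r rDg; rewrite Yr => /hasP[e'' e''_edges re''].
have k'lt : index e'' (link_edges p q) < 8 by rewrite -[8]/(size (link_edges p q)) index_mem.
have Re'' : reduced_edge e'' by rewrite -(nth_index [::] e''_edges); apply: link_code_reduced.
have e'E' : e' = link_vertex (index e'' (link_edges p q)).
  rewrite e'E /link_vertex /link_code nth_index //; apply/same_edgeP.
  by rewrite (same_edge_subst uv_basis) //; apply: (allP (D_nth_reduced g)).
exists g, (index e'' (link_edges p q)); split; rewrite -?link_vertex_in_face -?F0E -?e'E' //.
by apply/selP; rewrite -F0E.
Qed.

Lemma link_degree j : j < 8 -> count (fun js => j \in js) (mask (map sel F) (map ends F)) = 2.
Proof.
move=> jlt; rewrite -map_mask -filter_mask count_map count_filter.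
have [_ _ S_edges _] := S_ham.
have [F1 [F2 [[F12 SF1 SF2 eF1 eF2] only12]]] := S_edges _ (link_vertex_is_edge jlt).
have [g1 g1F F1E] := surface_face_at_link_vertex jlt SF1 eF1.
have [g2 g2F F2E] := surface_face_at_link_vertex jlt SF2 eF2.
have inF g : g \in F -> g < size D by rewrite mem_filter mem_iota => /and3P[].
apply: (count_two (a := g1) (b := g2)) => //=.
- exact/filter_uniq/iota_uniq.
- by apply/eqP => g12; apply: F12; rewrite F1E F2E g12.
- by rewrite -link_vertex_in_face // -F1E eF1; apply/selP; rewrite -F1E.
- by rewrite -link_vertex_in_face // -F2E eF2; apply/selP; rewrite -F2E.
move=> g gF; rewrite -link_vertex_in_face // => /andP[eg /selP Sg].
by case: (only12 _ Sg eg) => E; [left | right];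
  apply: nbhd_face_inj; rewrite ?inF // E ?F1E ?F2E.
Qed.

(* Without a chosen face crossing the cut [m], no path of the link of [x] could leave the
   side of the cut where it starts. *)
Lemma link_connected m :
  has (nth false m) (iota 0 8) -> has (fun j => ~~ nth false m j) (iota 0 8) ->
  has (crosses m) (mask (map sel F) (map ends F)).
Proof.
move=> /hasP[i + mi] /hasP[j + mj]; rewrite !mem_iota /= => ilt jlt.
rewrite -map_mask -filter_mask has_map; apply/negPn/negP => no_cross.
have inside e e' : clos_refl_trans_1n edge (link_adj S x) e e' ->
    (exists k, [/\ k < 8, nth false m k & e = link_vertex k]) ->
    exists k, [/\ k < 8, nth false m k & e' = link_vertex k].
  elim=> // e1 e2 e3 adj _ IH [k [klt mk E1]]; apply: IH; move: adj; rewrite E1.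
  case/(link_adj_ends klt)=> g [k' [gF sg kg k'g ->]]; exists k'; split => //.
    by move: k'g; rewrite mem_filter mem_iota => /and3P[].
  have : ~~ crosses m (ends g).
    by apply: contra no_cross => cr; apply/hasP; exists g; rewrite // mem_filter sg.
  by move=> /hasPn/(_ k kg)/hasPn/(_ k' k'g); rewrite mk negbK => /eqP <-.
have [_ _ _ S_conn] := S_ham.
have path := S_conn _ vertex_is_vertex _ _ (link_vertex_is_edge ilt) (link_vertex_is_edge jlt)
  (vertex_in_link_vertex ilt) (vertex_in_link_vertex jlt).
have [k [klt mk /link_vertex_inj Ejk]] :=
  inside _ _ (clos_rt_rt1n _ _ _ _ path) (ex_intro _ i (And3 ilt mi erefl)).
by move: mj; rewrite (Ejk jlt klt) mk.
Qed.

Lemma link_constr_holds : holds (link_constr D p q) sel.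
Proof.
rewrite /holds /= /link_cycle_test.
have -> : link_two_regular 8 (mask (map sel F) (map ends F)).
  by apply/allP => j; rewrite mem_iota => /andP[_ jlt]; rewrite link_degree.
by apply/allP => m _; apply/implyP => /andP[]; apply: link_connected.
Qed.
End LinkCycle.

(** * The neighbourhood of [{a, b}] *)

Definition decide (P : Prop) : bool := if excluded_middle_informative P then true else false.

Lemma decideP (P : Prop) : reflect P (decide P).
Proof. by rewrite /decide; case: excluded_middle_informative => H; constructor. Qed.

Lemma three_in_pair (T : eqType) (s : seq T) x y z : size s <= 2 ->
  x \in s -> y \in s -> z \in s -> [|| x == y, x == z | y == z].
Proof.
move=> s_small xs ys zs; apply/negPn/negP => /norP[xy /norP[xz yz]].
have xyz_uniq : uniq [:: x; y; z] by rewrite /= !inE negb_or xy xz yz.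
have xyz_s : {subset [:: x; y; z] <= s} by apply/allP; rewrite /= xs ys zs.
by have := leq_trans (uniq_leq_size xyz_uniq xyz_s) s_small.
Qed.

Definition nbhd_pairs : seq (word * word) :=
  (ga, gb) :: [seq (xy.1, fmul xy.1 xy.2) | xy <- edge_pairs ga gb].

Section Certificate.
Variables (D : seq (seq (seq (seq word)))) (traces : seq (seq bool)).
Hypothesis D_reduced : all reduced_face D.
Hypothesis D_uniq : uniq (map face_key D).
Hypothesis D_ok : all (fun pq => vertex_ok D pq.1 pq.2) nbhd_pairs.
Hypothesis D_cover : all (fun pq => all (fun c => has (same_face c) D)
                                        (faces_around (vert_code pq.1 pq.2))) nbhd_pairs.
Hypothesis D_search : search [seq link_constr D pq.1 pq.2 | pq <- nbhd_pairs]
  (Constr (faces_at D (vert_code ga gb)) (fun t => t \in traces)) (size D) [::].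

Definition trace (u v : word) (S : faceset) : seq bool :=
  [seq decide (S (nbhd_face D u v g)) | g <- faces_at D (vert_code ga gb)].

Lemma trace_admissible u v S : is_basis u v -> is_ham_surface S -> trace u v S \in traces.
Proof.
move=> uv_basis S_ham.
apply: (search_sound (f := fun g => decide (S (nbhd_face D u v g))) (n := 0) D_search).
  rewrite all_map; apply/allP => pq pq_nbhd.
  apply: (link_constr_holds uv_basis D_reduced D_uniq S_ham).
  - by move=> g; apply: decideP.
  - exact: (allP D_ok).
  - exact: (allP D_cover).
by apply/allP => g; rewrite mem_filter mem_iota => /andP[].
Qed.

Lemma same_link_of_trace u v S S' : is_basis u v -> is_ham_surface S -> is_ham_surface S' ->
  trace u v S = trace u v S' -> same_link S S' (vert u v).
Proof.
move=> uv_basis S_ham S'_ham /eq_in_map E; have [Ru Rv _ _] := uv_basis.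
have base_nbhd : (ga, gb) \in nbhd_pairs by rewrite mem_head.
have x_E : vert u v = vtx_of (subst_vtx u v (vert_code ga gb)).
  by rewrite subst_vert_code (subst_ga _ Ru) (subst_gb _ Rv) vert_codeE.
have transfer (S1 S2 : faceset) : is_ham_surface S1 ->
    {in faces_at D (vert_code ga gb), forall g, S1 (nbhd_face D u v g) -> S2 (nbhd_face D u v g)} ->
    forall F, link_part S1 (vert u v) F -> link_part S2 (vert u v) F.
  move=> [S1_faces _ _ _] S12 F [S1F Fx]; split => //; move: S1F Fx; rewrite x_E.
  move=> S1F /(face_at_vertex uv_basis D_reduced (allP D_ok _ base_nbhd)
    (allP D_cover _ base_nbhd) (S1_faces _ S1F)) [g g_base F_E].
  by rewrite F_E in S1F *; apply: S12.
move=> F; split; [apply: (transfer _ _ S_ham) | apply: (transfer _ _ S'_ham)];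
  move=> g /E /= Eg /decideP.
  by rewrite Eg => /decideP.
by rewrite -Eg => /decideP.
Qed.
End Certificate.

Definition nbhd_faces : seq (seq (seq (seq word))) :=
  reps face_key [::] (flatten [seq faces_around (vert_code pq.1 pq.2) | pq <- nbhd_pairs]).

(* The first four faces at [{a, b}] are its triangles. *)
Definition admissible_traces : seq (seq bool) :=
  [:: [:: true; true; true; true; true; false; true; false; false; true; false; true];
      [:: true; true; true; true; false; true; false; true; true; false; true; false]].

Lemma nbhd_faces_ok :
  all reduced_face nbhd_faces && all (fun pq => vertex_ok nbhd_faces pq.1 pq.2) nbhd_pairs.
Proof. by vm_compute. Qed.

Lemma nbhd_search : search [seq link_constr nbhd_faces pq.1 pq.2 | pq <- nbhd_pairs]
  (Constr (faces_at nbhd_faces (vert_code ga gb)) (fun t => t \in admissible_traces))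
  (size nbhd_faces) [::].
Proof. by vm_compute. Qed.

Lemma nbhd_faces_cover : all (fun pq => all (fun c => has (same_face c) nbhd_faces)
                                            (faces_around (vert_code pq.1 pq.2))) nbhd_pairs.
Proof.
apply/allP => pq pq_nbhd; apply/allP => c c_around; apply: reps_has_same_face.
apply/flattenP; exists (faces_around (vert_code pq.1 pq.2)) => //.
exact: (map_f (fun pq => faces_around (vert_code pq.1 pq.2)) pq_nbhd).
Qed.

Theorem mainTheorem6 :
  forall x : vtx, is_vertex x ->
  forall S1 S2 S3 : faceset,
    is_ham_surface S1 -> is_ham_surface S2 -> is_ham_surface S3 ->
    same_link S1 S2 x \/ same_link S1 S3 x \/ same_link S2 S3 x.
Proof.
move=> x [u [v [uv_basis ->]]] S1 S2 S3 H1 H2 H3.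
have /andP[D_reduced D_ok] := nbhd_faces_ok.
have D_uniq : uniq (map face_key nbhd_faces) by apply: reps_uniq.
have adm S := trace_admissible D_reduced D_uniq D_ok nbhd_faces_cover nbhd_search (S := S) uv_basis.
have same := same_link_of_trace D_reduced D_ok nbhd_faces_cover uv_basis.
have := three_in_pair (isT : size admissible_traces <= 2) (adm _ H1) (adm _ H2) (adm _ H3).
by case/or3P=> /eqP E; [left | right; left | right; right]; apply: same E.
Qed.
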